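(* There exist an environment $E$ and a total preorder $\succeq$ on $\Pi^E$ such that $\succeq\in\mathrm{Ord}_{\mathrm{GOMORL}}(E)$ but $\succeq\notin\mathrm{Ord}_{\mathrm{FPR}}(E)$; that is, no function $J:\Pi^E\to\mathbb R$ satisfies $\pi_1\succeq\pi_2\iff J(\pi_1)\ge J(\pi_2)$. (Such an ordering can be obtained from a GOMORL specification with $k=2$ and $\succeq_J$ the lexicographic order on $\mathbb R^2$.)
   Context: An environment is a tuple $E=(\mathcal S,\mathcal A,\mathcal T,\mathcal I)$ where $\mathcal S,\mathcal A$ are finite nonempty sets, $\mathcal T:\mathcal S\times\mathcal A\to\Delta(\mathcal S)$ and $\mathcal I\in\Delta(\mathcal S)$. A policy is a map $\pi:\mathcal S\to\Delta(\mathcal A)$ (stationary, possibly stochastic); $\Pi^E$ denotes the set of all policies. A trajectory $\xi=(s_0,a_0,s_1,a_1,\dots)$ is generated under $\pi$ by $s_0\sim\mathcal I$, $a_t\sim\pi(s_t)$, $s_{t+1}\sim\mathcal T(s_t,a_t)$; $\mathbb E^\pi_\xi$ denotes expectation under this distribution. An objective-specification formalism $X$ assigns to each environment $E$ a set of objective specifications, each inducing a total preorder $\succeq$ on $\Pi^E$; $\mathrm{Ord}_X(E)$ is the set of total preorders so induced. A specification defining a scalar $J:\Pi^E\to\mathbb R$ induces $\pi_1\succeq\pi_2\iff J(\pi_1)\ge J(\pi_2)$. FPR: specification $(J)$ with $J:\Pi^E\to\mathbb R$ an arbitrary function. GOMORL: specification $(k,\mathcal R,\gamma,\succeq_J)$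 with $k\in\mathbb N$, $\mathcal R:\mathcal S\times\mathcal A\times\mathcal S\to\mathbb R^k$ with components $\mathcal R_i$, $\gamma\in[0,1)$, $\succeq_J$ a total preorder on $\mathbb R^k$; with $\vec J(\pi)=(J_1(\pi),\dots,J_k(\pi))$, $J_i(\pi)=\mathbb E^\pi_\xi[\sum_{t=0}^\infty\gamma^t\mathcal R_i(s_t,a_t,s_{t+1})]$, it induces $\pi_1\succeq\pi_2\iff\vec J(\pi_1)\succeq_J\vec J(\pi_2)$. The lexicographic order on $\mathbb R^2$ is $(x_1,x_2)\succeq(y_1,y_2)$ iff $x_1>y_1$, or $x_1=y_1$ and $x_2\ge y_2$. *)

From HB Require Import structures.
From mathcomp Require Import all_boot all_order all_algebra.
From mathcomp Require Import all_classical all_reals all_analysis.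
Set Implicit Arguments. Unset Strict Implicit. Unset Printing Implicit Defensive.
Import Order.TTheory GRing.Theory Num.Theory numFieldNormedType.Exports.
Local Open Scope ring_scope.

Definition is_dist (R : realType) (T : finType) (p : T -> R) : Prop :=
  (forall x, 0 <= p x) /\ \sum_(x : T) p x = 1.

Record env (R : realType) := Env {
  st : finType;
  act : finType;
  st_inhabited : st;
  act_inhabited : act;
  trans : st -> act -> st -> R;
  init : st -> R;
  trans_dist : forall s a, is_dist (trans s a);
  init_dist : is_dist init }.
Arguments trans {R} e _ _ _.
Arguments init {R} e _.

Definition policy (R : realType) (E : env R) :=
  { pi : st E -> act E -> R | forall s, is_dist (pi s) }.

Definition polf (R : realType) (E : env R) (pi : policy E) : st E -> act E -> R :=
  proj1_sig pi.

Definition prefix_prob (R : realType) (E : env R) (pi : policy E) (n : nat)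
  (ss : {ffun 'I_n.+1 -> st E}) (aa : {ffun 'I_n -> act E}) : R :=
  init E (ss ord0) *
  \prod_(t < n) (polf pi (ss (inord t)) (aa t) *
                 trans E (ss (inord t)) (aa t) (ss (inord t.+1))).

Definition trunc_return (R : realType) (E : env R) (pi : policy E)
  (r : st E -> act E -> st E -> R) (gamma : R) (n : nat) : R :=
  \sum_(ss : {ffun 'I_n.+1 -> st E}) \sum_(aa : {ffun 'I_n -> act E})
    prefix_prob pi ss aa *
    \sum_(t < n) gamma ^+ t * r (ss (inord t)) (aa t) (ss (inord t.+1)).

(* J(pi) = E^pi[ sum_{t>=0} gamma^t r(...) ], the limit of the truncated
   expected returns (equal to the expectation of the infinite sum by
   dominated convergence, as rewards are bounded and gamma < 1). *)
Definition disc_return (R : realType) (E : env R) (pi : policy E)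
  (r : st E -> act E -> st E -> R) (gamma : R) : R :=
  limn (trunc_return pi r gamma).

Definition total_preorder (T : Type) (le : T -> T -> Prop) : Prop :=
  (forall x y z, le x y -> le y z -> le x z) /\ (forall x y, le x y \/ le y x).

Definition in_Ord_FPR (R : realType) (E : env R)
  (ord : policy E -> policy E -> Prop) : Prop :=
  exists J : policy E -> R, forall p1 p2, ord p1 p2 <-> J p2 <= J p1.

Definition in_Ord_GOMORL (R : realType) (E : env R)
  (ord : policy E -> policy E -> Prop) : Prop :=
  exists (k : nat) (rw : st E -> act E -> st E -> 'I_k -> R) (gamma : R)
         (ordJ : ('I_k -> R) -> ('I_k -> R) -> Prop),
    0 <= gamma /\ gamma < 1 /\ total_preorder ordJ /\
    forall p1 p2, ord p1 p2 <->
      ordJ (fun i => disc_return p1 (fun s a s' => rw s a s' i) gamma)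
           (fun i => disc_return p2 (fun s a s' => rw s a s' i) gamma).

(* Under the lexicographic order on value vectors, the policies with values
   (x, 0) and (x, 1/2) are strictly ranked for every x in [0, 1/2], and both
   lie strictly below the policy with value (y, 0) whenever x < y.  A utility
   J would therefore assign to each x in [0, 1/2] a nonempty open interval
   ]J (x, 0), J (x, 1/2)[, pairwise disjoint; picking a rational in each
   interval injects the uncountable set [0, 1/2] into the rationals.  The
   environment realising these values is a one-state bandit with three
   actions, discount 0 and reward components the indicators of two actions,
   so that the value vector of a policy is its pair of action probabilities. *)
From mathcomp Require Import all_boot all_order all_algebra.
From mathcomp Require Import all_classical all_reals all_analysis.
From mathcomp Require Import lra.
Set Implicit Arguments. Unset Strict Implicit. Unset Printing Implicit Defensive.
Import Order.TTheory GRing.Theory Num.Theory numFieldNormedType.Exports.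
Local Open Scope ring_scope.

Lemma total_preorder_comap (T U : Type) (le : U -> U -> Prop) (f : T -> U) :
  total_preorder le -> total_preorder (fun x y => le (f x) (f y)).
Proof. by move=> [le_trans le_total]; split=> [x y z|x y]; [exact: le_trans|]. Qed.

Section LexicographicOrder.
Variable R : realType.

Definition lex2 (u w : 'I_2 -> R) : Prop :=
  w ord0 < u ord0 \/ (u ord0 = w ord0 /\ w ord_max <= u ord_max).

Lemma lex2_total_preorder : total_preorder lex2.
Proof.
split=> [x y z|x y].
  move=> [yx|[xy0 yx1]] [zy|[yz0 zy1]]; rewrite /lex2.
  - by left; apply: lt_trans zy yx.
  - by left; rewrite -yz0.
  - by left; rewrite xy0.
  - by right; split; [rewrite xy0 yz0 | apply: le_trans zy1 yx1].
rewrite /lex2; case: (ltgtP (x ord0) (y ord0)) => [xy|yx|->]; first by right; left.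
  by left; left.
by case: (lerP (y ord_max) (x ord_max)) => [yx|/ltW xy]; [left|right]; right.
Qed.

Lemma countable_interleaved_intervals (a b : R -> R) (D : set R) :
    (forall x, D x -> a x < b x) ->
    (forall x y, D x -> D y -> x < y -> b x <= a y) ->
  countable D.
Proof.
move=> ab_lt ba_le.
pose B x : set R := if a x < b x then `]a x, b x[%classic else setT.
apply: (@separated_open_countable R R B).
- by move=> x; rewrite /B; case: ifP => _; [exact: itv_open | exact: openT].
- move=> x; rewrite /B; case: ifP => abx; last by exists 0.
  by exists ((a x + b x) / 2); rewrite /= in_itv /=; apply/andP; split; lra.
move=> x y Dx Dy [z []]; rewrite /B (ab_lt _ Dx) (ab_lt _ Dy) /= !in_itv /=.
move=> /andP[axz zbx] /andP[ayz zby].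
case: (ltgtP x y) => // [xy|yx].
- by have := ba_le _ _ Dx Dy xy; lra.
- by have := ba_le _ _ Dy Dx yx; lra.
Qed.

Lemma itv_not_countable (x0 x1 : R) : x0 < x1 -> ~ countable `[x0, x1]%classic.
Proof.
move=> x01 /countable_lebesgue_measure0.
rewrite lebesgue_measure_itv /= lte_fin x01 => /eqP.
by rewrite eqe subr_eq0 gt_eqF.
Qed.

Lemma lex2_not_representable (T : Type) (V : T -> 'I_2 -> R) (J : T -> R)
    (x0 x1 y0 y1 : R) (lo hi : R -> T) :
    x0 < x1 -> y0 < y1 ->
    (forall x, x0 <= x <= x1 -> V (lo x) ord0 = x /\ V (lo x) ord_max = y0) ->
    (forall x, x0 <= x <= x1 -> V (hi x) ord0 = x /\ V (hi x) ord_max = y1) ->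
  ~ (forall t1 t2, lex2 (V t1) (V t2) <-> J t2 <= J t1).
Proof.
move=> x01 y01 Vlo Vhi J_repr.
apply: (itv_not_countable x01).
apply: (@countable_interleaved_intervals (J \o lo) (J \o hi)) => [x|x y] /=.
  rewrite in_itv /= => xD; have [lo0 lo1] := Vlo _ xD; have [hi0 hi1] := Vhi _ xD.
  rewrite ltNge; apply/negP => /J_repr; rewrite /lex2 lo0 lo1 hi0 hi1 ltxx.
  by case=> [//|[_]]; rewrite leNgt y01.
rewrite !in_itv /= => /Vhi[hi0 _] /Vlo[lo0 _] xy.
by apply/J_repr; rewrite /lex2 lo0 hi0; left.
Qed.

End LexicographicOrder.

Section Bandit.
Variables (R : realType) (A : finType) (a0 : A).

Lemma dist_unit : is_dist (fun _ : unit => 1 : R).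
Proof. by split=> //; rewrite big_const card_unit /= addr0. Qed.

Definition bandit : env R :=
  @Env R unit A tt a0 (fun _ _ _ => 1) (fun _ => 1) (fun _ _ => dist_unit) dist_unit.

Lemma dist_point : is_dist (fun a : A => (a == a0)%:R : R).
Proof.
split=> [a|]; first exact: ler0n.
by rewrite (bigD1 a0) //= eqxx big1 ?addr0 // => a /negbTE ->.
Qed.

Definition const_policy (p : A -> R) (dp : is_dist p) : policy bandit :=
  exist (fun pi : unit -> A -> R => forall s, is_dist (pi s)) (fun _ => p) (fun _ => dp).

(* Outside the distributions the map falls back to the point mass at [a0]. *)
Definition bandit_policy (p : A -> R) : policy bandit :=
  match pselect (is_dist p) with
  | left dp => const_policy dp
  | right _ => const_policy dist_point
  end.

Lemma bandit_policyE (p : A -> R) : is_dist p -> polf (bandit_policy p) tt = p.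
Proof. by rewrite /bandit_policy; case: pselect. Qed.

Section Myopic.
Variables (pi : policy bandit) (r : unit -> A -> unit -> R).

(* With discount 0 only the first reward counts; the product over the
   remaining steps sums to 1 since each factor is a distribution. *)
Lemma trunc_return_bandit0 n :
  trunc_return pi r 0 n.+1 = \sum_(a : A) polf pi tt a * r tt a tt.
Proof.
pose F (t : 'I_n.+1) (a : A) := polf pi tt a * (if t == ord0 then r tt a tt else 1).
have summand ss aa : prefix_prob pi ss aa *
    \sum_(t < n.+1) 0 ^+ t * r (ss (inord t)) (aa t) (ss (inord t.+1))
    = \prod_t F t (aa t).
  have ss_tt i : ss i = tt by case: (ss i).
  rewrite /prefix_prob /= mul1r; under eq_bigr do rewrite !ss_tt mulr1.
  have -> : \sum_(t < n.+1) 0 ^+ t * r (ss (inord t)) (aa t) (ss (inord t.+1))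
            = r tt (aa ord0) tt.
    rewrite big_ord_recl big1 => [|t _]; last by rewrite /= exprS !mul0r.
    by rewrite expr0 mul1r addr0 !ss_tt.
  rewrite !big_ord_recl /F eqxx.
  under [in RHS]eq_bigr do rewrite lift_eqF mulr1.
  by rewrite mulrAC.
rewrite /trunc_return; under eq_bigr do under eq_bigr do rewrite summand.
rewrite sumr_const card_ffun /= card_unit exp1n mulr1n -(bigA_distr_bigA F) /=.
rewrite big_ord_recl [X in _ * X]big1 ?mulr1 => [|t _].
  by apply: eq_bigr => a; rewrite /F eqxx.
rewrite /F lift_eqF; under eq_bigr do rewrite mulr1.
by case: (proj2_sig pi tt).
Qed.

Lemma disc_return_bandit0 :
  disc_return pi r 0 = \sum_(a : A) polf pi tt a * r tt a tt.
Proof.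
apply: lim_near_cst => //; near=> n.
have n_gt0 : (0 < n)%N by near: n; exists 1%N.
by rewrite -(prednK n_gt0) trunc_return_bandit0.
Unshelve. all: by end_near.
Qed.

End Myopic.
End Bandit.

Section ThreeArmedBandit.
Variable R : realType.

Definition action_reward (s : unit) (a : 'I_3) (s' : unit) (i : 'I_2) : R :=
  (a == i :> nat)%:R.

Definition value_vector (pi : policy (bandit R (ord0 : 'I_3))) (i : 'I_2) : R :=
  disc_return pi (fun s a s' => action_reward s a s' i) 0.

Definition dist3 (x y : R) (a : 'I_3) : R :=
  if a == 0 :> nat then x else if a == 1 :> nat then y else 1 - x - y.

Lemma dist3_dist x y : 0 <= x -> 0 <= y -> x + y <= 1 -> is_dist (dist3 x y).
Proof.
move=> x_ge0 y_ge0 xy_le1; split=> [a|].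
  by rewrite /dist3; case: ifP => // _; case: ifP => // _; lra.
by rewrite !big_ord_recl big_ord0 /dist3 /=; lra.
Qed.

Lemma value_vector_dist3 x y : 0 <= x -> 0 <= y -> x + y <= 1 ->
  value_vector (bandit_policy _ (dist3 x y)) ord0 = x /\
  value_vector (bandit_policy _ (dist3 x y)) ord_max = y.
Proof.
move=> x_ge0 y_ge0 xy_le1; rewrite /value_vector !disc_return_bandit0.
rewrite bandit_policyE; last exact: dist3_dist.
rewrite !big_ord_recl big_ord0 /dist3 /action_reward /=.
by split; lra.
Qed.

End ThreeArmedBandit.

Theorem mainTheorem17 (R : realType) :
  exists (E : env R) (ord : policy E -> policy E -> Prop),
    total_preorder ord /\ in_Ord_GOMORL ord /\ ~ in_Ord_FPR ord.
Proof.
exists (bandit R (ord0 : 'I_3)), (fun p1 p2 => lex2 (value_vector p1) (value_vector p2)).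
split; first exact/total_preorder_comap/lex2_total_preorder.
split.
  exists 2%N, (@action_reward R), 0, (@lex2 R).
  by do 3 split=> //; exact: lex2_total_preorder.
move=> [J J_repr].
apply: (@lex2_not_representable R _ _ J 0 (1/2) 0 (1/2)
          (fun x => bandit_policy _ (dist3 x 0))
          (fun x => bandit_policy _ (dist3 x (1/2)))) => //; try lra.
- by move=> x /andP[x_ge0 x_le]; apply: value_vector_dist3; lra.
- by move=> x /andP[x_ge0 x_le]; apply: value_vector_dist3; lra.
Qed.
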